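(* (i) The unimodal spi-logic $\mathsf{SPi}+\{\iota_{sym}\}$ is complex, and hence complete. (ii) $\mathsf{SPi}+\{\iota_{refl},\iota_{trans},\iota_{sym}\}=\mathsf{SPi}+\{\iota_{refl},\iota_{trans},\iota_{eucl}\}$, and this spi-logic is complex, and hence complete.
   Context: Unimodal setting: one diamond $\Diamond$. Sp-formulas: built from propositional variables and $\top$ by $\wedge$ and $\Diamond$; sp-implications $\sigma\to\tau$. A SLO is an algebra $(A,\wedge,\top,\Diamond)$ with $(A,\wedge,\top)$ a meet-semilattice with top and $\Diamond$ monotone; it validates $\sigma\to\tau$ if $\sigma[\mathfrak a]\le\tau[\mathfrak a]$ for all valuations. Frames $(W,R)$ with standard Kripke semantics. $\mathsf{SPi}+\Sigma$ is the set of sp-implications valid in every SLO validating $\Sigma$; it is complete if it equals the set of sp-implications valid in every frame validating $\Sigma$. For a frame $\mathfrak F=(W,R)$, $\mathfrak F^\star=(2^W,\cap,W,\Diamond^+)$ with $\Diamond^+X=\{w\mid\exists v\in X,(w,v)\in R\}$; a spi-logic $L$ is complex if every SLO validating $L$ embeds (injectively, preserving $\wedge,\top,\Diamond$) into $\mathfrak F^\star$ for some frame $\mathfrak F$ validating $L$. Notation: $\iota_{refl}=(p\to\Diamond p)$, $\iota_{trans}=(\Diamond\Diamond p\to\Diamond p)$, $\iota_{sym}=(q\wedge\Diamond p\to\Diamond(p\wedge\Diamond q))$, $\iota_{eucl}=(\Diamond p\wedge\Diamond q\to\Diamond(p\wedge\Diamond q))$. *)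

Set Implicit Arguments.

Inductive spf : Type :=
| Var : nat -> spf
| Top : spf
| And : spf -> spf -> spf
| Dia : spf -> spf.

Record spi : Type := Imp { ante : spf; cons : spf }.

Record SLO : Type := {
  carrier :> Type;
  meet : carrier -> carrier -> carrier;
  top : carrier;
  dia : carrier -> carrier;
  meet_assoc : forall a b c, meet a (meet b c) = meet (meet a b) c;
  meet_comm : forall a b, meet a b = meet b a;
  meet_idem : forall a, meet a a = a;
  meet_top : forall a, meet a top = a;
  dia_mono : forall a b, meet a b = a -> meet (dia a) (dia b) = dia a
}.

Definition sle (A : SLO) (a b : A) : Prop := meet A a b = a.

Fixpoint eval (A : SLO) (v : nat -> A) (f : spf) : A :=
  match f with
  | Var n => v n
  | Top => top A
  | And f g => meet A (eval A v f) (eval A v g)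
  | Dia f => dia A (eval A v f)
  end.

Definition slo_valid (A : SLO) (i : spi) : Prop :=
  forall v : nat -> A, sle A (eval A v (ante i)) (eval A v (cons i)).

Definition SPi (Sigma : spi -> Prop) : spi -> Prop :=
  fun i => forall A : SLO, (forall j, Sigma j -> slo_valid A j) -> slo_valid A i.

Record frame : Type := { world : Type; rel : world -> world -> Prop }.

Fixpoint sat (F : frame) (V : nat -> world F -> Prop) (w : world F) (f : spf)
  : Prop :=
  match f with
  | Var n => V n w
  | Top => True
  | And f g => sat F V w f /\ sat F V w g
  | Dia f => exists u, rel F w u /\ sat F V u f
  end.

Definition frame_valid (F : frame) (i : spi) : Prop :=
  forall (V : nat -> world F -> Prop) (w : world F),
    sat F V w (ante i) -> sat F V w (cons i).

Definition complete (Sigma : spi -> Prop) : Prop :=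
  forall i, SPi Sigma i <->
    (forall F : frame, (forall j, Sigma j -> frame_valid F j) -> frame_valid F i).

(** Complex algebra F* = (2^W, cap, W, Dia+); subsets of W as predicates. *)
Definition dia_plus (F : frame) (X : world F -> Prop) : world F -> Prop :=
  fun w => exists u, rel F w u /\ X u.

(** Injective (S)LO-embedding of A into F*; equality of subsets of W is
    extensional equality. *)
Definition embeds (A : SLO) (F : frame) : Prop :=
  exists h : A -> (world F -> Prop),
    (forall a b, (forall w, h a w <-> h b w) -> a = b) /\
    (forall a b w, h (meet A a b) w <-> (h a w /\ h b w)) /\
    (forall w, h (top A) w) /\
    (forall a w, h (dia A a) w <-> dia_plus F (h a) w).

Definition complex (L : spi -> Prop) : Prop :=
  forall A : SLO, (forall j, L j -> slo_valid A j) ->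
    exists F : frame, (forall j, L j -> frame_valid F j) /\ embeds A F.

Definition p := Var 0.
Definition q := Var 1.
Definition i_refl : spi := Imp p (Dia p).
Definition i_trans : spi := Imp (Dia (Dia p)) (Dia p).
Definition i_sym : spi := Imp (And q (Dia p)) (Dia (And p (Dia q))).
Definition i_eucl : spi := Imp (And (Dia p) (Dia q)) (Dia (And p (Dia q))).

Definition Sig_sym : spi -> Prop := fun i => i = i_sym.
Definition Sig_rts : spi -> Prop := fun i => i = i_refl \/ i = i_trans \/ i = i_sym.
Definition Sig_rte : spi -> Prop := fun i => i = i_refl \/ i = i_trans \/ i = i_eucl.

(* Represent an SLO A in the frame of its filters, with F R G iff
   [dia] maps G into F and F into G; this relation is symmetric by
   construction, and reflexive (transitive) when A validates iota_refl
   (iota_trans).  Sending a to the set of filters containing a preserves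
   meet and top, and is injective thanks to principal filters.  It also
   preserves dia when A validates iota_sym: if dia a is in F, the filter
   generated by a /\ dia b (b in F) is an R-successor of F containing a,
   because iota_sym gives dia (a /\ dia b) >= b /\ dia a.  Hence SPi + sym
   and SPi + {refl, trans, sym} are complex, and complex logics are
   complete.  Over refl and trans, iota_sym and iota_eucl are
   interderivable, which identifies the two logics of (ii). *)

From Stdlib Require Import FunctionalExtensionality PropExtensionality.

Section SemilatticeOrder.
Variable A : SLO.

Lemma sle_refl (a : A) : sle A a a.
Proof. apply meet_idem. Qed.

Lemma sle_trans (a b c : A) : sle A a b -> sle A b c -> sle A a c.
Proof.
  unfold sle; intros Hab Hbc.
  rewrite <- Hab at 1. rewrite <- meet_assoc, Hbc. exact Hab.
Qed.

Lemma sle_antisym (a b : A) : sle A a b -> sle A b a -> a = b.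
Proof.
  unfold sle; intros Hab Hba.
  rewrite <- Hab, meet_comm. exact Hba.
Qed.

Lemma sle_top (a : A) : sle A a (top A).
Proof. apply meet_top. Qed.

Lemma sle_meetl (a b : A) : sle A (meet A a b) a.
Proof.
  unfold sle. rewrite (meet_comm A (meet A a b) a), meet_assoc, meet_idem.
  reflexivity.
Qed.

Lemma sle_meetr (a b : A) : sle A (meet A a b) b.
Proof. unfold sle. rewrite <- meet_assoc, meet_idem. reflexivity. Qed.

Lemma sle_meet (x a b : A) : sle A x a -> sle A x b -> sle A x (meet A a b).
Proof. unfold sle; intros Ha Hb. rewrite meet_assoc, Ha, Hb. reflexivity. Qed.

Lemma meet_sle2 (a a' b b' : A) :
  sle A a a' -> sle A b b' -> sle A (meet A a b) (meet A a' b').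
Proof.
  intros Ha Hb. apply sle_meet.
  - apply sle_trans with a; [apply sle_meetl | exact Ha].
  - apply sle_trans with b; [apply sle_meetr | exact Hb].
Qed.

Lemma dia_sle (a b : A) : sle A a b -> sle A (dia A a) (dia A b).
Proof. apply dia_mono. Qed.

End SemilatticeOrder.

Section SloValidity.
Variable A : SLO.

Definition valuation2 (a b : A) (n : nat) : A :=
  match n with 0 => a | _ => b end.

Lemma slo_valid_refl :
  slo_valid A i_refl <-> forall a : A, sle A a (dia A a).
Proof. split; intros H; [intros a; exact (H (fun _ => a)) | intros v; apply H]. Qed.

Lemma slo_valid_trans :
  slo_valid A i_trans <-> forall a : A, sle A (dia A (dia A a)) (dia A a).
Proof. split; intros H; [intros a; exact (H (fun _ => a)) | intros v; apply H]. Qed.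

Lemma slo_valid_sym :
  slo_valid A i_sym <->
  forall a b : A, sle A (meet A b (dia A a)) (dia A (meet A a (dia A b))).
Proof.
  split; intros H; [intros a b; exact (H (valuation2 a b)) | intros v; apply H].
Qed.

Lemma slo_valid_eucl :
  slo_valid A i_eucl <->
  forall a b : A, sle A (meet A (dia A a) (dia A b)) (dia A (meet A a (dia A b))).
Proof.
  split; intros H; [intros a b; exact (H (valuation2 a b)) | intros v; apply H].
Qed.

Lemma slo_valid_sym_of_refl_eucl :
  slo_valid A i_refl -> slo_valid A i_eucl -> slo_valid A i_sym.
Proof.
  rewrite slo_valid_refl, slo_valid_eucl, slo_valid_sym; intros Hrefl Heucl a b.
  apply sle_trans with (meet A (dia A a) (dia A b)); [|apply Heucl].
  rewrite (meet_comm A b). apply meet_sle2; [apply sle_refl | apply Hrefl].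
Qed.

Lemma slo_valid_eucl_of_trans_sym :
  slo_valid A i_trans -> slo_valid A i_sym -> slo_valid A i_eucl.
Proof.
  rewrite slo_valid_trans, slo_valid_sym, slo_valid_eucl; intros Htrans Hsym a b.
  rewrite (meet_comm A (dia A a)).
  apply sle_trans with (dia A (meet A a (dia A (dia A b)))); [apply Hsym|].
  apply dia_sle, meet_sle2; [apply sle_refl | apply Htrans].
Qed.

End SloValidity.

Section FrameValidity.
Variable F : frame.

Lemma frame_valid_refl :
  (forall w, rel F w w) -> frame_valid F i_refl.
Proof. intros Hrefl V w Hp. exists w. auto. Qed.

Lemma frame_valid_trans :
  (forall w u t, rel F w u -> rel F u t -> rel F w t) -> frame_valid F i_trans.
Proof.
  intros Htrans V w [u [Hwu [t [Hut Hp]]]]. exists t. split; [eauto | exact Hp].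
Qed.

Lemma frame_valid_sym :
  (forall w u, rel F w u -> rel F u w) -> frame_valid F i_sym.
Proof.
  intros Hsym V w [Hq [u [Hwu Hp]]]. exists u. split; [exact Hwu|].
  split; [exact Hp|]. exists w. auto.
Qed.

End FrameValidity.

Section Homomorphism.
Variables (A : SLO) (F : frame) (h : A -> world F -> Prop).
Hypothesis h_meet : forall a b w, h (meet A a b) w <-> (h a w /\ h b w).
Hypothesis h_top : forall w, h (top A) w.
Hypothesis h_dia : forall a w, h (dia A a) w <-> dia_plus F (h a) w.

Lemma eval_hom (v : nat -> A) (f : spf) (w : world F) :
  h (eval A v f) w <-> sat F (fun n => h (v n)) w f.
Proof.
  revert w; induction f as [n | | f IHf g IHg | f IHf]; intros w; simpl.
  - tauto.
  - split; auto.
  - rewrite h_meet, IHf, IHg. tauto.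
  - rewrite h_dia. unfold dia_plus.
    split; intros [u [Hwu Hu]]; exists u; split; auto; apply IHf; auto.
Qed.

End Homomorphism.

Lemma embeds_slo_valid (A : SLO) (F : frame) (i : spi) :
  embeds A F -> frame_valid F i -> slo_valid A i.
Proof.
  intros [h [h_inj [h_meet [h_top h_dia]]]] Hi v. apply h_inj. intros w.
  rewrite h_meet, !(eval_hom A F h h_meet h_top h_dia).
  split; [tauto|]. intros Hante. split; [exact Hante | apply Hi, Hante].
Qed.

Section ComplexAlgebra.
Variable F : frame.

Lemma pred_ext (X Y : world F -> Prop) : (forall w, X w <-> Y w) -> X = Y.
Proof.
  intros H. apply functional_extensionality. intros w.
  apply propositional_extensionality, H.
Qed.

Definition Fstar : SLO.
Proof.
  refine {| carrier := world F -> Prop;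
            meet := fun X Y w => X w /\ Y w;
            top := fun _ => True;
            dia := dia_plus F |};
    [intros; apply pred_ext; tauto .. |].
  intros X Y HXY. apply pred_ext. intros w.
  split; [tauto|]. intros Hw. split; [exact Hw|].
  destruct Hw as [u [Hwu Hu]]. exists u. split; [exact Hwu|].
  rewrite <- HXY in Hu. apply Hu.
Defined.

Lemma Fstar_sle (X Y : Fstar) : sle Fstar X Y <-> forall w, X w -> Y w.
Proof.
  split.
  - intros HXY w Hw. rewrite <- HXY in Hw. apply Hw.
  - intros HXY. apply pred_ext. intros w. simpl. split; [tauto | auto].
Qed.

Lemma frame_valid_Fstar (i : spi) : frame_valid F i <-> slo_valid Fstar i.
Proof.
  assert (Heval : forall v f w, eval Fstar v f w <-> sat F v w f).
  { intros v f w. apply (eval_hom Fstar F (fun X => X)); simpl; tauto. }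
  split.
  - intros Hi v. apply Fstar_sle. intros w. rewrite !Heval. apply Hi.
  - intros Hi V w. rewrite <- !Heval. apply Fstar_sle, Hi.
Qed.

End ComplexAlgebra.

Lemma SPi_of_mem (S : spi -> Prop) (j : spi) : S j -> SPi S j.
Proof. intros Hj A HA. apply HA, Hj. Qed.

Lemma SPi_frame_valid (S : spi -> Prop) (F : frame) :
  (forall j, S j -> frame_valid F j) -> forall i, SPi S i -> frame_valid F i.
Proof.
  intros HF i Hi. apply frame_valid_Fstar, Hi.
  intros j Hj. apply frame_valid_Fstar, HF, Hj.
Qed.

Lemma SPi_ext (S S' : spi -> Prop) :
  (forall A : SLO, (forall j, S j -> slo_valid A j) <-> (forall j, S' j -> slo_valid A j)) ->
  forall i, SPi S i <-> SPi S' i.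
Proof.
  intros HSS' i. split; intros Hi A HA; apply Hi, HSS', HA.
Qed.

Lemma complex_SPi (S : spi -> Prop) :
  (forall A : SLO, (forall j, S j -> slo_valid A j) ->
     exists F : frame, (forall j, S j -> frame_valid F j) /\ embeds A F) ->
  complex (SPi S).
Proof.
  intros Hrep A HA.
  destruct (Hrep A (fun j Hj => HA j (SPi_of_mem S j Hj))) as [F [HF HAF]].
  exists F. split; [exact (SPi_frame_valid S F HF) | exact HAF].
Qed.

Lemma complex_complete (S : spi -> Prop) : complex (SPi S) -> complete S.
Proof.
  intros Hcx i. split.
  - intros Hi F HF. exact (SPi_frame_valid S F HF i Hi).
  - intros Hi A HA.
    destruct (Hcx A (fun j Hj => Hj A HA)) as [F [HF HAF]].
    apply (embeds_slo_valid A F i HAF), Hi.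
    intros j Hj. apply HF, SPi_of_mem, Hj.
Qed.

Section CanonicalFrame.
Variable A : SLO.

Record Filter : Type := {
  in_filter :> A -> Prop;
  filter_top : in_filter (top A);
  filter_up : forall a b, in_filter a -> sle A a b -> in_filter b;
  filter_meet : forall a b, in_filter a -> in_filter b -> in_filter (meet A a b)
}.

Definition canon_rel (P Q : Filter) : Prop :=
  (forall a, Q a -> P (dia A a)) /\ (forall a, P a -> Q (dia A a)).

Definition canon_frame : frame := {| world := Filter; rel := canon_rel |}.

Lemma canon_rel_sym (P Q : Filter) : canon_rel P Q -> canon_rel Q P.
Proof. intros [HQP HPQ]. split; assumption. Qed.

Lemma canon_rel_refl (P : Filter) :
  slo_valid A i_refl -> canon_rel P P.
Proof.
  rewrite slo_valid_refl; intros Hrefl.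
  split; intros a Ha; apply filter_up with a; auto.
Qed.

Lemma canon_rel_trans (P Q T : Filter) :
  slo_valid A i_trans -> canon_rel P Q -> canon_rel Q T -> canon_rel P T.
Proof.
  rewrite slo_valid_trans; intros Htrans [HQP HPQ] [HTQ HQT].
  split; intros a Ha; apply filter_up with (dia A (dia A a)); auto.
Qed.

Definition principal_filter (a : A) : Filter.
Proof.
  refine {| in_filter := fun x => sle A a x |}.
  - apply sle_top.
  - intros x y; apply sle_trans.
  - intros x y; apply sle_meet.
Defined.

Definition successor_filter (P : Filter) (a : A) : Filter.
Proof.
  refine {| in_filter := fun x => exists b, P b /\ sle A (meet A a (dia A b)) x |}.
  - exists (top A). split; [apply filter_top | apply sle_top].
  - intros x y [b [Hb Hx]] Hxy. exists b. split; [exact Hb|].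
    apply sle_trans with x; assumption.
  - intros x y [b [Hb Hx]] [c [Hc Hy]]. exists (meet A b c).
    split; [apply filter_meet; assumption|].
    apply sle_meet.
    + apply sle_trans with (meet A a (dia A b)); [|exact Hx].
      apply meet_sle2; [apply sle_refl | apply dia_sle, sle_meetl].
    + apply sle_trans with (meet A a (dia A c)); [|exact Hy].
      apply meet_sle2; [apply sle_refl | apply dia_sle, sle_meetr].
Defined.

Lemma canon_rel_successor_filter (P : Filter) (a : A) :
  slo_valid A i_sym -> P (dia A a) -> canon_rel P (successor_filter P a).
Proof.
  rewrite slo_valid_sym; intros Hsym Ha. split.
  - intros x [b [Hb Hx]].
    apply filter_up with (dia A (meet A a (dia A b))); [|apply dia_sle, Hx].
    apply filter_up with (meet A b (dia A a)); [apply filter_meet; assumption | apply Hsym].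
  - intros b Hb. exists b. split; [exact Hb | apply sle_meetr].
Qed.

Lemma canon_embeds : slo_valid A i_sym -> embeds A canon_frame.
Proof.
  intros Hsym. exists (fun a (P : Filter) => P a). split; [|split; [|split]].
  - intros a b Hab. apply sle_antisym.
    + apply (Hab (principal_filter a)), sle_refl.
    + apply (Hab (principal_filter b)), sle_refl.
  - intros a b P. split.
    + intros Hab. split; apply filter_up with (meet A a b);
        [exact Hab | apply sle_meetl | exact Hab | apply sle_meetr].
    + intros [Ha Hb]. apply filter_meet; assumption.
  - intros P. apply filter_top.
  - intros a P. split.
    + intros Ha. exists (successor_filter P a).
      split; [apply canon_rel_successor_filter; assumption|].
      exists (top A). split; [apply filter_top | apply sle_meetl].
    + intros [Q [[HQP _] Ha]]. apply HQP, Ha.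
Qed.

End CanonicalFrame.

Lemma complex_SPi_sym : complex (SPi Sig_sym).
Proof.
  apply complex_SPi. intros A HA.
  assert (Hsym : slo_valid A i_sym) by (apply HA; reflexivity).
  exists (canon_frame A). split; [|apply canon_embeds, Hsym].
  intros j Hj. rewrite Hj. apply frame_valid_sym, canon_rel_sym.
Qed.

Lemma complex_SPi_rts : complex (SPi Sig_rts).
Proof.
  apply complex_SPi. intros A HA.
  assert (Hrefl : slo_valid A i_refl) by (apply HA; left; reflexivity).
  assert (Htrans : slo_valid A i_trans) by (apply HA; right; left; reflexivity).
  assert (Hsym : slo_valid A i_sym) by (apply HA; right; right; reflexivity).
  exists (canon_frame A). split; [|apply canon_embeds, Hsym].
  intros j [Hj | [Hj | Hj]]; rewrite Hj.
  - apply frame_valid_refl. intros P. apply canon_rel_refl, Hrefl.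
  - apply frame_valid_trans. intros P Q T. apply canon_rel_trans, Htrans.
  - apply frame_valid_sym, canon_rel_sym.
Qed.

Lemma SPi_rts_rte (i : spi) : SPi Sig_rts i <-> SPi Sig_rte i.
Proof.
  apply SPi_ext. intros A. split; intros HA j Hj;
    destruct Hj as [Hj | [Hj | Hj]]; rewrite Hj.
  - apply HA; left; reflexivity.
  - apply HA; right; left; reflexivity.
  - apply slo_valid_eucl_of_trans_sym;
      apply HA; [right; left | right; right]; reflexivity.
  - apply HA; left; reflexivity.
  - apply HA; right; left; reflexivity.
  - apply slo_valid_sym_of_refl_eucl;
      apply HA; [left | right; right]; reflexivity.
Qed.

Theorem theorem5p14 :
  (complex (SPi Sig_sym) /\ complete Sig_sym) /\
  ((forall i, SPi Sig_rts i <-> SPi Sig_rte i) /\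
   complex (SPi Sig_rts) /\ complete Sig_rts).
Proof.
  split; [split | split; [|split]].
  - exact complex_SPi_sym.
  - apply complex_complete, complex_SPi_sym.
  - exact SPi_rts_rte.
  - exact complex_SPi_rts.
  - apply complex_complete, complex_SPi_rts.
Qed.
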